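(* In the commutative squares of canonical functors $$\operatorname{Pro}(\mathbf{Rng})\to\mathrm{Rng}(\operatorname{Pro}(\mathbf{Set})),\ \operatorname{Pro}(\mathbf{CRng})\to\mathrm{CRng}(\operatorname{Pro}(\mathbf{Set})),\ \operatorname{Pro}(\mathbf{CRng})\to\operatorname{Pro}(\mathbf{Rng}),\ \mathrm{CRng}(\operatorname{Pro}(\mathbf{Set}))\to\mathrm{Rng}(\operatorname{Pro}(\mathbf{Set}))$$ and $$\operatorname{Pro}(\mathbf{Ring})\to\mathrm{Ring}(\operatorname{Pro}(\mathbf{Set})),\ \operatorname{Pro}(\mathbf{CRing})\to\mathrm{CRing}(\operatorname{Pro}(\mathbf{Set})),\ \operatorname{Pro}(\mathbf{CRing})\to\operatorname{Pro}(\mathbf{Ring}),\ \mathrm{CRing}(\operatorname{Pro}(\mathbf{Set}))\to\mathrm{Ring}(\operatorname{Pro}(\mathbf{Set}))$$ all functors are fully faithful. Moreover, a pro-ring $R$ (object of $\operatorname{Pro}(\mathbf{Rng})$) is isomorphic in $\operatorname{Pro}(\mathbf{Rng})$ to a commutative pro-ring, to a unital pro-ring, or to a unital commutative pro-ring if and only if its image in $\mathrm{Rng}(\operatorname{Pro}(\mathbf{Set}))$ is, respectively, a commutative ring object, a unital ring object, or a unital commutative ring object in $\operatorname{Pro}(\mathbf{Set})$.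
   Context: For a category $\mathcal C$, $\operatorname{Pro}(\mathcal C)$ is its pro-completion: objects are inverse systems, i.e. functors $X\colon \mathcal I_X^{op}\to\mathcal C$ with $\mathcal I_X$ a small filtered category, and $\operatorname{Hom}_{\operatorname{Pro}(\mathcal C)}(X,Y)=\varprojlim_{j\in\mathcal I_Y}\varinjlim_{i\in\mathcal I_X}\mathcal C(X_i,Y_j)$. For an algebraic theory $T$ and a category $\mathcal D$ with finite products, $T(\mathcal D)$ is the category of internal $T$-algebras in $\mathcal D$; $\mathbf T=T(\mathbf{Set})$. Theories: $\mathrm{Rng}$ = non-unital associative rings, $\mathrm{Ring}$ = unital rings, $\mathrm{CRng}$ = non-unital commutative rings, $\mathrm{CRing}$ = unital commutative rings (homomorphisms of unital rings preserve units). The canonical functor $\operatorname{Pro}(\mathbf T)\to T(\operatorname{Pro}(\mathbf{Set}))$ sends an inverse system of $T$-algebras to the same inverse system of sets with levelwise operations. *)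

From Stdlib Require Import ClassicalEpsilon.
Set Implicit Arguments.
Unset Strict Implicit.

Record cat := Cat {
  ob :> Type;
  hom : ob -> ob -> Type;
  idm : forall a, hom a a;
  cmp : forall x y z, hom y z -> hom x y -> hom x z;
  cmp_id_l : forall a b (f : hom a b), cmp (idm b) f = f;
  cmp_id_r : forall a b (f : hom a b), cmp f (idm a) = f;
  cmp_assoc : forall a b c d (h : hom c d) (g : hom b c) (f : hom a b),
      cmp h (cmp g f) = cmp (cmp h g) f }.
Arguments idm {_} _.
Arguments cmp {_ x y z} _ _.

Definition filtered (I : cat) : Prop :=
  inhabited I /\
  (forall i j : I, exists k : I, inhabited (hom i k) /\ inhabited (hom j k)) /\
  (forall (i j : I) (u v : hom i j), exists (k : I) (w : hom j k), cmp w u = cmp w v).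

Lemma prod_cat_l (I J : cat) (a b : I * J) (f : hom (fst a) (fst b) * hom (snd a) (snd b)) :
  (cmp (idm (fst b)) (fst f), cmp (idm (snd b)) (snd f)) = f.
Proof. destruct f; simpl; rewrite !cmp_id_l; reflexivity. Qed.
Lemma prod_cat_r (I J : cat) (a b : I * J) (f : hom (fst a) (fst b) * hom (snd a) (snd b)) :
  (cmp (fst f) (idm (fst a)), cmp (snd f) (idm (snd a))) = f.
Proof. destruct f; simpl; rewrite !cmp_id_r; reflexivity. Qed.
Lemma prod_cat_A (I J : cat) (a b c d : I * J)
  (h : hom (fst c) (fst d) * hom (snd c) (snd d))
  (g : hom (fst b) (fst c) * hom (snd b) (snd c))
  (f : hom (fst a) (fst b) * hom (snd a) (snd b)) :
  (cmp (fst h) (fst (cmp (fst g) (fst f), cmp (snd g) (snd f))),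
   cmp (snd h) (snd (cmp (fst g) (fst f), cmp (snd g) (snd f)))) =
  (cmp (fst (cmp (fst h) (fst g), cmp (snd h) (snd g))) (fst f),
   cmp (snd (cmp (fst h) (fst g), cmp (snd h) (snd g))) (snd f)).
Proof. simpl; rewrite !cmp_assoc; reflexivity. Qed.

Definition prod_cat (I J : cat) : cat :=
  @Cat (I * J) (fun a b => (hom (fst a) (fst b) * hom (snd a) (snd b))%type)
    (fun a => (idm (fst a), idm (snd a)))
    (fun a b c g f => (cmp (fst g) (fst f), cmp (snd g) (snd f)))
    (@prod_cat_l I J) (@prod_cat_r I J) (@prod_cat_A I J).

Lemma prod_filtered (I J : cat) : filtered I -> filtered J -> filtered (prod_cat I J).
Proof.
  intros [[i0] [HI1 HI2]] [[j0] [HJ1 HJ2]]; split; [|split].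
  - exact (inhabits ((i0, j0) : prod_cat I J)).
  - intros [i j] [i' j'].
    destruct (HI1 i i') as [k [[u] [u']]]; destruct (HJ1 j j') as [l [[v] [v']]].
    exists ((k, l) : prod_cat I J); split; constructor; [exact (u, v) | exact (u', v')].
  - intros [i j] [i' j'] [u1 u2] [v1 v2].
    destruct (HI2 _ _ u1 v1) as [k [w1 E1]].
    destruct (HJ2 _ _ u2 v2) as [l [w2 E2]].
    exists ((k, l) : prod_cat I J), ((w1, w2) : hom (c0 := prod_cat I J) (i', j') (k, l)).
    simpl in *; rewrite E1, E2; reflexivity.
Qed.

Definition unit_cat : cat :=
  @Cat unit (fun _ _ => unit) (fun _ => tt) (fun _ _ _ _ _ => tt)
    (fun _ _ f => match f with tt => eq_refl end)
    (fun _ _ f => match f with tt => eq_refl end)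
    (fun _ _ _ _ _ _ _ => eq_refl).

Lemma unit_filtered : filtered unit_cat.
Proof.
  split; [exact (inhabits (tt : unit_cat)) | split].
  - intros i j; exists (tt : unit_cat); split; constructor; exact tt.
  - intros i j u v; exists (tt : unit_cat), (tt : hom (c0 := unit_cat) j tt); reflexivity.
Qed.

Record ccat := CCat {
  cob : Type;
  car : cob -> Type;
  ishom : forall a b, (car a -> car b) -> Prop;
  ishom_id : forall a, @ishom a a (fun x => x);
  ishom_comp : forall a b c (g : car b -> car c) (f : car a -> car b),
      ishom g -> ishom f -> ishom (fun x => g (f x)) }.
Arguments ishom {_ a b} _.
Arguments car : clear implicits.

Definition SetC : ccat :=
  @CCat Type (fun X => X) (fun _ _ _ => True) (fun _ => I) (fun _ _ _ _ _ _ _ => I).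

Record rng := Rng {
  rcar :> Type;
  radd : rcar -> rcar -> rcar;
  rzero : rcar;
  rneg : rcar -> rcar;
  rmul : rcar -> rcar -> rcar;
  raddA : forall x y z, radd (radd x y) z = radd x (radd y z);
  raddC : forall x y, radd x y = radd y x;
  radd0 : forall x, radd rzero x = x;
  raddN : forall x, radd (rneg x) x = rzero;
  rmulA : forall x y z, rmul (rmul x y) z = rmul x (rmul y z);
  rmulDr : forall x y z, rmul x (radd y z) = radd (rmul x y) (rmul x z);
  rmulDl : forall x y z, rmul (radd x y) z = radd (rmul x z) (rmul y z) }.
Arguments rzero {r}.

Definition rng_hom (A B : rng) (f : A -> B) : Prop :=
  (forall x y, f (radd x y) = radd (f x) (f y)) /\ f rzero = rzero /\
  (forall x, f (rneg x) = rneg (f x)) /\ (forall x y, f (rmul x y) = rmul (f x) (f y)).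

Record crng := CRng { crng_rng :> rng; crng_comm : forall x y : crng_rng, rmul x y = rmul y x }.

Record ring := Ring {
  ring_rng :> rng;
  rone : ring_rng;
  rmul1l : forall x, rmul rone x = x;
  rmul1r : forall x, rmul x rone = x }.
Definition ring_hom (A B : ring) (f : A -> B) : Prop := rng_hom f /\ f (rone A) = rone B.

Record cring := CRing { cring_ring :> ring; cring_comm : forall x y : cring_ring, rmul x y = rmul y x }.

Lemma rng_hom_id (A : rng) : rng_hom (fun x : A => x).
Proof. repeat split. Qed.
Lemma rng_hom_comp (A B C : rng) (g : B -> C) (f : A -> B) :
  rng_hom g -> rng_hom f -> rng_hom (fun x => g (f x)).
Proof.
  intros [g1 [g2 [g3 g4]]] [f1 [f2 [f3 f4]]]; repeat split; intros;
  rewrite ?f1, ?f2, ?f3, ?f4, ?g1, ?g2, ?g3, ?g4; reflexivity.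
Qed.
Lemma ring_hom_id (A : ring) : ring_hom (fun x : A => x).
Proof. split; [apply rng_hom_id | reflexivity]. Qed.
Lemma ring_hom_comp (A B C : ring) (g : B -> C) (f : A -> B) :
  ring_hom g -> ring_hom f -> ring_hom (fun x => g (f x)).
Proof.
  intros [Hg Eg] [Hf Ef]; split; [apply rng_hom_comp; assumption|].
  simpl; rewrite Ef; exact Eg.
Qed.

Definition RngC : ccat := @CCat rng rcar (@rng_hom) (@rng_hom_id) (@rng_hom_comp).
Definition CRngC : ccat :=
  @CCat crng (fun a => rcar (crng_rng a)) (fun a b f => @rng_hom a b f)
    (fun a => @rng_hom_id a) (fun a b c => @rng_hom_comp a b c).
Definition RingC : ccat := @CCat ring (fun a => rcar (ring_rng a)) (@ring_hom)
    (@ring_hom_id) (@ring_hom_comp).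
Definition CRingC : ccat :=
  @CCat cring (fun a => rcar (ring_rng (cring_ring a))) (fun a b f => @ring_hom a b f)
    (fun a => @ring_hom_id a) (fun a b c => @ring_hom_comp a b c).

(* Functors between concrete categories that act on underlying sets through
   (in all our instances: identity) bijections -- the forgetful functors. *)
Record cfunctor (C D : ccat) := CFunctor {
  fob : cob C -> cob D;
  fin : forall a, car C a -> car D (fob a);
  fout : forall a, car D (fob a) -> car C a;
  fin_out : forall (a : cob C) x, @fin a (@fout a x) = x;
  fout_in : forall (a : cob C) x, @fout a (@fin a x) = x;
  fhom : forall a b (f : car C a -> car C b), ishom f -> ishom (fun x => @fin b (f (@fout a x))) }.

Arguments fob {C D} c _.
Arguments fin {C D} c a _.
Arguments fout {C D} c a _.
Arguments fhom {C D} c {a b f} _.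

Definition ForgetSet (C : ccat) : cfunctor C SetC :=
  @CFunctor C SetC (car C) (fun _ x => x) (fun _ x => x)
    (fun _ _ => eq_refl) (fun _ _ => eq_refl) (fun _ _ _ _ => I).
Definition F_CRng_Rng : cfunctor CRngC RngC :=
  @CFunctor CRngC RngC crng_rng (fun _ x => x) (fun _ x => x)
    (fun _ _ => eq_refl) (fun _ _ => eq_refl) (fun _ _ _ h => h).
Definition F_Ring_Rng : cfunctor RingC RngC :=
  @CFunctor RingC RngC ring_rng (fun _ x => x) (fun _ x => x)
    (fun _ _ => eq_refl) (fun _ _ => eq_refl) (fun _ _ _ h => proj1 h).
Definition F_CRing_Ring : cfunctor CRingC RingC :=
  @CFunctor CRingC RingC cring_ring (fun _ x => x) (fun _ x => x)
    (fun _ _ => eq_refl) (fun _ _ => eq_refl) (fun _ _ _ h => h).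

Record prosys (C : ccat) := ProSys {
  pidx : cat;
  pidx_filt : filtered pidx;
  pobj : pidx -> cob C;
  pmap : forall i j : pidx, hom i j -> car C (pobj j) -> car C (pobj i);
  pmap_hom : forall i j (u : hom i j), ishom (pmap u);
  pmap_id : forall i x, pmap (idm i) x = x;
  pmap_comp : forall i j k (v : hom j k) (u : hom i j) x,
      pmap (cmp v u) x = pmap u (pmap v x) }.
Arguments pmap {C} p {i j} _ _.
Arguments pobj {C} p _.
Arguments pidx {C} p.
Arguments pidx_filt {C} p.
Arguments pmap_hom {C} p {i j} _.

(* An element of colim_i C(X_i, Y_j): a germ, i.e. a representative (i, f). *)
Record germ (C : ccat) (X Y : prosys C) (j : pidx Y) := Germ {
  gi : pidx X;
  gf : car C (pobj X gi) -> car C (pobj Y j);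
  gh : ishom gf }.
Arguments germ {C} X Y j.
Arguments Germ {C X Y j} gi gf gh.
Arguments gi {C X Y j} g.
Arguments gf {C X Y j} g _.
Arguments gh {C X Y j} g.

(* The equivalence relation defining the filtered colimit of hom-sets. *)
Definition germ_eq (C : ccat) (X Y : prosys C) (j : pidx Y) (g g' : germ X Y j) : Prop :=
  exists (k : pidx X) (u : hom (gi g) k) (u' : hom (gi g') k),
    forall x, gf g (pmap X u x) = gf g' (pmap X u' x).

(* Families (j |-> germ); a morphism of Pro(C) is such a family that is
   compatible (an element of the limit over j), taken modulo pro_eq. *)
Definition premor (C : ccat) (X Y : prosys C) := forall j : pidx Y, germ X Y j.

Definition germ_post (C : ccat) (X Y : prosys C) (j j' : pidx Y) (v : hom j j')
  (g : germ X Y j') : germ X Y j :=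
  Germ (gi g) (fun x => pmap Y v (gf g x)) (ishom_comp (pmap_hom Y v) (gh g)).

Definition is_promor (C : ccat) (X Y : prosys C) (phi : premor X Y) : Prop :=
  forall (j j' : pidx Y) (v : hom j j'), germ_eq (germ_post v (phi j')) (phi j).

Definition pro_eq (C : ccat) (X Y : prosys C) (phi psi : premor X Y) : Prop :=
  forall j, germ_eq (phi j) (psi j).

Definition pid (C : ccat) (X : prosys C) : premor X X :=
  fun j => Germ j (fun x => x) (ishom_id _).

Definition pcomp (C : ccat) (X Y Z : prosys C) (psi : premor Y Z) (phi : premor X Y)
  : premor X Z :=
  fun k => Germ (gi (phi (gi (psi k)))) (fun x => gf (psi k) (gf (phi (gi (psi k))) x))
                (ishom_comp (gh (psi k)) (gh (phi (gi (psi k))))).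

Arguments pid {C} X _.

Definition pro_iso (C : ccat) (X Y : prosys C) : Prop :=
  exists (phi : premor X Y) (psi : premor Y X),
    is_promor phi /\ is_promor psi /\
    pro_eq (pcomp psi phi) (pid X) /\ pro_eq (pcomp phi psi) (pid Y).

Definition pro_map_sys (C D : ccat) (F : cfunctor C D) (X : prosys C) : prosys D.
Proof.
  refine (@ProSys D (pidx X) (pidx_filt X) (fun i => fob F (pobj X i))
            (fun i j u x => fin F _ (pmap X u (fout F _ x)))
            (fun i j u => fhom F (pmap_hom X u)) _ _).
  - intros i x; rewrite pmap_id; apply fin_out.
  - intros i j k v u x; rewrite pmap_comp, fout_in; reflexivity.
Defined.

Definition pro_map_mor (C D : ccat) (F : cfunctor C D) (X Y : prosys C) (phi : premor X Y)
  : premor (pro_map_sys F X) (pro_map_sys F Y) :=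
  fun j => @Germ D (pro_map_sys F X) (pro_map_sys F Y) j (gi (phi j))
                (fun x => fin F _ (gf (phi j) (fout F _ x))) (fhom F (gh (phi j))).

Arguments pro_map_sys {C D} F X.
Arguments pro_map_mor {C D} F {X Y} phi _.

Definition pro_fully_faithful (C D : ccat) (F : cfunctor C D) : Prop :=
  forall X Y : prosys C,
    (forall phi psi : premor X Y, is_promor phi -> is_promor psi ->
        pro_eq (pro_map_mor F phi) (pro_map_mor F psi) -> pro_eq phi psi) /\
    (forall g : premor (pro_map_sys F X) (pro_map_sys F Y), is_promor g ->
        exists phi : premor X Y, is_promor phi /\ pro_eq (pro_map_mor F phi) g).

Definition some_idx (I : cat) (HI : filtered I) : I := epsilon (proj1 HI) (fun _ => True).

Definition common (I : cat) (HI : filtered I) (i j : I) : {k : I & (hom i k * hom j k)%type}.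
Proof.
  destruct (constructive_indefinite_description _ (proj1 (proj2 HI) i j)) as [k [Hi Hj]].
  exact (existT _ k (epsilon Hi (fun _ => True), epsilon Hj (fun _ => True))).
Defined.

Definition pset := prosys SetC.

Definition prod_sys (X Y : pset) : pset.
Proof.
  refine (@ProSys SetC (prod_cat (pidx X) (pidx Y))
            (prod_filtered (pidx_filt X) (pidx_filt Y))
            (fun ij => (pobj X (fst ij) * pobj Y (snd ij))%type)
            (fun a b uv p => (pmap X (fst uv) (fst p), pmap Y (snd uv) (snd p)))
            (fun _ _ _ => I) _ _).
  - intros i [x y]; simpl; rewrite !pmap_id; reflexivity.
  - intros i j k v u [x y]; simpl; rewrite !pmap_comp; reflexivity.
Defined.

Definition One : pset :=
  @ProSys SetC unit_cat unit_filtered (fun _ => unit : Type) (fun _ _ _ x => x)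
    (fun _ _ _ => I) (fun _ _ => eq_refl) (fun _ _ _ _ _ _ => eq_refl).

Definition bang (Z : pset) : premor Z One :=
  fun o => @Germ SetC Z One o (some_idx (pidx_filt Z)) (fun _ => tt : unit) I.


Definition pr1 (X Y : pset) : premor (prod_sys X Y) X :=
  fun j => @Germ SetC (prod_sys X Y) X j ((j, some_idx (pidx_filt Y)) : pidx (prod_sys X Y))
                (fun p : (pobj X j * pobj Y (some_idx (pidx_filt Y)))%type => fst p) I.
Definition pr2 (X Y : pset) : premor (prod_sys X Y) Y :=
  fun j => @Germ SetC (prod_sys X Y) Y j ((some_idx (pidx_filt X), j) : pidx (prod_sys X Y))
                (fun p : (pobj X (some_idx (pidx_filt X)) * pobj Y j)%type => snd p) I.


Arguments pr1 : clear implicits.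
Arguments pr2 : clear implicits.
Arguments bang : clear implicits.

Definition ppair (Z X Y : pset) (phi : premor Z X) (psi : premor Z Y)
  : premor Z (prod_sys X Y) :=
  fun jj =>
    let g := phi (fst jj) in
    let h := psi (snd jj) in
    let c := common (pidx_filt Z) (gi g) (gi h) in
    @Germ SetC Z (prod_sys X Y) jj (projT1 c : pidx Z)
      (fun z => (gf g (pmap Z (fst (projT2 c)) z), gf h (pmap Z (snd (projT2 c)) z)) :
          (pobj X (fst jj) * pobj Y (snd jj))%type) I.

Record rngdata := RngData {
  ro_X : pset;
  ro_add : premor (prod_sys ro_X ro_X) ro_X;
  ro_zero : premor One ro_X;
  ro_neg : premor ro_X ro_X;
  ro_mul : premor (prod_sys ro_X ro_X) ro_X }.

Arguments ro_add : clear implicits.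
Arguments ro_zero : clear implicits.
Arguments ro_neg : clear implicits.
Arguments ro_mul : clear implicits.

Section RingObjAxioms.
Variable A : rngdata.
Let X := ro_X A.
Let X2 := prod_sys X X.
Let X3 := prod_sys X2 X.
Let p1 : premor X3 X := pcomp (pr1 X X) (pr1 X2 X).
Let p2 : premor X3 X := pcomp (pr2 X X) (pr1 X2 X).
Let p3 : premor X3 X := pr2 X2 X.
Let q1 : premor X2 X := pr1 X X.
Let q2 : premor X2 X := pr2 X X.
Let add := ro_add A.
Let mul := ro_mul A.

Definition is_rngobj : Prop :=
  is_promor add /\ is_promor (ro_zero A) /\ is_promor (ro_neg A) /\ is_promor mul /\
  (* (x + y) + z = x + (y + z) *)
  pro_eq (pcomp add (ppair (pcomp add (ppair p1 p2)) p3))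
         (pcomp add (ppair p1 (pcomp add (ppair p2 p3)))) /\
  (* x + y = y + x *)
  pro_eq (pcomp add (ppair q2 q1)) add /\
  (* 0 + x = x *)
  pro_eq (pcomp add (ppair (pcomp (ro_zero A) (bang X)) (pid X))) (pid X) /\
  (* (-x) + x = 0 *)
  pro_eq (pcomp add (ppair (ro_neg A) (pid X))) (pcomp (ro_zero A) (bang X)) /\
  (* (x y) z = x (y z) *)
  pro_eq (pcomp mul (ppair (pcomp mul (ppair p1 p2)) p3))
         (pcomp mul (ppair p1 (pcomp mul (ppair p2 p3)))) /\
  (* x (y + z) = x y + x z *)
  pro_eq (pcomp mul (ppair p1 (pcomp add (ppair p2 p3))))
         (pcomp add (ppair (pcomp mul (ppair p1 p2)) (pcomp mul (ppair p1 p3)))) /\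
  (* (x + y) z = x z + y z *)
  pro_eq (pcomp mul (ppair (pcomp add (ppair p1 p2)) p3))
         (pcomp add (ppair (pcomp mul (ppair p1 p3)) (pcomp mul (ppair p2 p3)))).

Definition ro_comm : Prop := pro_eq (pcomp mul (ppair q2 q1)) mul.

Definition is_crngobj : Prop := is_rngobj /\ ro_comm.

Definition ro_unit_laws (e : premor One X) : Prop :=
  is_promor e /\
  pro_eq (pcomp mul (ppair (pcomp e (bang X)) (pid X))) (pid X) /\
  pro_eq (pcomp mul (ppair (pid X) (pcomp e (bang X)))) (pid X).
End RingObjAxioms.

Definition pprod_map (X Y : pset) (f : premor X Y) : premor (prod_sys X X) (prod_sys Y Y) :=
  ppair (pcomp f (pr1 X X)) (pcomp f (pr2 X X)).

Definition is_rngobj_mor (A B : rngdata) (f : premor (ro_X A) (ro_X B)) : Prop :=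
  is_promor f /\
  pro_eq (pcomp f (ro_add A)) (pcomp (ro_add B) (pprod_map f)) /\
  pro_eq (pcomp f (ro_zero A)) (ro_zero B) /\
  pro_eq (pcomp f (ro_neg A)) (pcomp (ro_neg B) f) /\
  pro_eq (pcomp f (ro_mul A)) (pcomp (ro_mul B) (pprod_map f)).
Arguments is_rngobj_mor : clear implicits.
Definition is_crngobj_mor (A B : rngdata) (f : premor (ro_X A) (ro_X B)) : Prop :=
  is_rngobj_mor A B f.

Arguments is_crngobj_mor : clear implicits.
Arguments ro_unit_laws : clear implicits.

Record uringdata := URingData { ur_base : rngdata; ur_one : premor One (ro_X ur_base) }.
Arguments ur_one : clear implicits.
Definition is_uringobj (A : uringdata) : Prop :=
  is_rngobj (ur_base A) /\ ro_unit_laws (ur_base A) (ur_one A).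
Definition is_curingobj (A : uringdata) : Prop :=
  is_uringobj A /\ ro_comm (ur_base A).
Definition is_uringobj_mor (A B : uringdata) (f : premor (ro_X (ur_base A)) (ro_X (ur_base B)))
  : Prop := is_rngobj_mor (ur_base A) (ur_base B) f /\ pro_eq (pcomp f (ur_one A)) (ur_one B).
Arguments is_uringobj_mor : clear implicits.
Definition is_curingobj_mor (A B : uringdata) (f : premor (ro_X (ur_base A)) (ro_X (ur_base B)))
  : Prop := is_uringobj_mor A B f.
Arguments is_curingobj_mor : clear implicits.

(* The canonical functors Pro(T) -> T(Pro(Set)): same inverse system of *)
(* sets, with levelwise operations.                                    *)
Definition USet (C : ccat) := ForgetSet C.

Definition img_rng (R : prosys RngC) : rngdata :=
  let X := pro_map_sys (USet RngC) R in
  @RngData X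
    (fun j => @Germ SetC (prod_sys X X) X j ((j, j) : pidx (prod_sys X X))
                (fun p : (pobj R j * pobj R j)%type => radd (fst p) (snd p)) I)
    (fun j => @Germ SetC One X j (tt : pidx One) (fun _ : unit => @rzero (pobj R j)) I)
    (fun j => @Germ SetC X X j j (fun x : pobj R j => rneg x) I)
    (fun j => @Germ SetC (prod_sys X X) X j ((j, j) : pidx (prod_sys X X))
                (fun p : (pobj R j * pobj R j)%type => rmul (fst p) (snd p)) I).

Definition img_ring (R : prosys RingC) : uringdata :=
  @URingData (img_rng (pro_map_sys F_Ring_Rng R))
    (fun j => @Germ SetC One (ro_X (img_rng (pro_map_sys F_Ring_Rng R))) j
                (tt : pidx One) (fun _ : unit => rone (pobj R j)) I).

Definition img_crng (R : prosys CRngC) : rngdata := img_rng (pro_map_sys F_CRng_Rng R).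
Definition img_cring (R : prosys CRingC) : uringdata := img_ring (pro_map_sys F_CRing_Ring R).

Definition FF_ProRng_RngObj : Prop :=
  forall R S : prosys RngC,
    (forall phi psi : premor R S, is_promor phi -> is_promor psi ->
        pro_eq (pro_map_mor (USet RngC) phi) (pro_map_mor (USet RngC) psi) ->
        pro_eq phi psi) /\
    (forall g : premor (ro_X (img_rng R)) (ro_X (img_rng S)),
        is_rngobj_mor (img_rng R) (img_rng S) g ->
        exists phi : premor R S, is_promor phi /\ pro_eq (pro_map_mor (USet RngC) phi) g).

Definition FF_ProCRng_CRngObj : Prop :=
  forall R S : prosys CRngC,
    (forall phi psi : premor R S, is_promor phi -> is_promor psi ->
        pro_eq (pro_map_mor (USet RngC) (pro_map_mor F_CRng_Rng phi))
               (pro_map_mor (USet RngC) (pro_map_mor F_CRng_Rng psi)) ->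
        pro_eq phi psi) /\
    (forall g : premor (ro_X (img_crng R)) (ro_X (img_crng S)),
        is_crngobj_mor (img_crng R) (img_crng S) g ->
        exists phi : premor R S, is_promor phi /\
          pro_eq (pro_map_mor (USet RngC) (pro_map_mor F_CRng_Rng phi)) g).

Definition FF_CRngObj_RngObj : Prop :=
  forall A B : rngdata, is_crngobj A -> is_crngobj B ->
    forall f : premor (ro_X A) (ro_X B), is_crngobj_mor A B f <-> is_rngobj_mor A B f.

Definition FF_ProRing_RingObj : Prop :=
  forall R S : prosys RingC,
    (forall phi psi : premor R S, is_promor phi -> is_promor psi ->
        pro_eq (pro_map_mor (USet RngC) (pro_map_mor F_Ring_Rng phi))
               (pro_map_mor (USet RngC) (pro_map_mor F_Ring_Rng psi)) ->
        pro_eq phi psi) /\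
    (forall g : premor (ro_X (ur_base (img_ring R))) (ro_X (ur_base (img_ring S))),
        is_uringobj_mor (img_ring R) (img_ring S) g ->
        exists phi : premor R S, is_promor phi /\
          pro_eq (pro_map_mor (USet RngC) (pro_map_mor F_Ring_Rng phi)) g).

Definition FF_ProCRing_CRingObj : Prop :=
  forall R S : prosys CRingC,
    (forall phi psi : premor R S, is_promor phi -> is_promor psi ->
        pro_eq (pro_map_mor (USet RngC) (pro_map_mor F_Ring_Rng (pro_map_mor F_CRing_Ring phi)))
               (pro_map_mor (USet RngC) (pro_map_mor F_Ring_Rng (pro_map_mor F_CRing_Ring psi))) ->
        pro_eq phi psi) /\
    (forall g : premor (ro_X (ur_base (img_cring R))) (ro_X (ur_base (img_cring S))),
        is_curingobj_mor (img_cring R) (img_cring S) g ->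
        exists phi : premor R S, is_promor phi /\
          pro_eq (pro_map_mor (USet RngC)
                    (pro_map_mor F_Ring_Rng (pro_map_mor F_CRing_Ring phi))) g).

Definition FF_CRingObj_RingObj : Prop :=
  forall A B : uringdata, is_curingobj A -> is_curingobj B ->
    forall f : premor (ro_X (ur_base A)) (ro_X (ur_base B)),
      is_curingobj_mor A B f <-> is_uringobj_mor A B f.

(* A morphism between the images of two pro-rings in Rng(Pro(Set)) is given germwise by maps
   R_i -> S_j, and each of its defining equations is an equality of germs out of a finite power
   of R.  By filteredness such an equality already holds after pulling back along a single
   transition map, so every germ becomes a ring homomorphism after composing with a transition
   map: this is full faithfulness (the other functors are inclusions).  In the same way the
   image of R is a commutative ring object iff every R_j is eventually commutative, i.e. some
   transition map into R_j has commutative image, and it is a unital ring object iff R carries a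
   compatible family (e_j) that is eventually a two-sided unit.  These eventual properties pass
   along isomorphisms of pro-rings.  Conversely, an eventually commutative R is isomorphic to
   its levelwise abelianization, and R with an eventual unit (e_j) is isomorphic to the system
   of unital corner rings e_j R_j e_j. *)

From Stdlib Require Import ClassicalEpsilon ProofIrrelevance.
From Stdlib Require Import FunctionalExtensionality PropExtensionality.
Set Implicit Arguments.
Unset Strict Implicit.

Section Filtered.
Variable I : cat.
Hypothesis HI : filtered I.

Lemma filtered_coequalize (i j : I) (u v : hom i j) : exists k (w : hom j k), cmp w u = cmp w v.
Proof. exact (proj2 (proj2 HI) i j u v). Qed.

Lemma filtered_complete_span (j a b : I) (u : hom j a) (v : hom j b) :
  exists k (p : hom a k) (q : hom b k), cmp p u = cmp q v.
Proof.
  destruct (common HI a b) as [m [x y]].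
  destruct (filtered_coequalize (cmp x u) (cmp y v)) as [k [w E]].
  exists k, (cmp w x), (cmp w y). rewrite <- !cmp_assoc. exact E.
Qed.

Lemma filtered_complete_span2 (i i' c m : I) (al : hom i c) (a : hom i m)
  (be : hom i' c) (b : hom i' m) :
  exists k (p : hom c k) (q : hom m k), cmp p al = cmp q a /\ cmp p be = cmp q b.
Proof.
  destruct (filtered_complete_span al a) as [k1 [p1 [q1 E1]]].
  destruct (filtered_coequalize (cmp p1 be) (cmp q1 b)) as [k [w E]].
  exists k, (cmp w p1), (cmp w q1). rewrite <- !cmp_assoc, E1. split; [reflexivity | exact E].
Qed.

Lemma filtered_coequalize2 (j k1 k2 : I) (a a' : hom j k1) (b b' : hom j k2) :
  exists n (p1 : hom k1 n) (p2 : hom k2 n),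
    cmp p1 a = cmp p2 b /\ cmp p1 a' = cmp p2 b /\ cmp p2 b' = cmp p2 b.
Proof.
  destruct (filtered_coequalize a a') as [m1 [w1 E1]].
  destruct (filtered_coequalize b b') as [m2 [w2 E2]].
  destruct (filtered_complete_span (cmp w1 a) (cmp w2 b)) as [n [x [y E]]].
  exists n, (cmp x w1), (cmp y w2). rewrite <- !cmp_assoc, <- E1, <- E2.
  split; [exact E | split; [exact E | reflexivity]].
Qed.
Lemma filtered_cocone3 (i1 i2 i3 : I) :
  exists k (a1 : hom i1 k) (a2 : hom i2 k) (a3 : hom i3 k), True.
Proof.
  destruct (common HI i1 i2) as [m [a b]]. destruct (common HI m i3) as [k [c d]].
  exists k, (cmp c a), (cmp c b), d. exact Logic.I.
Qed.
End Filtered.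

Section Germs.
Variables (C : ccat) (X Y : prosys C).

Lemma pmap_cmp (i j k : pidx X) (v : hom j k) (u : hom i j) x :
  pmap X u (pmap X v x) = pmap X (cmp v u) x.
Proof. rewrite pmap_comp; reflexivity. Qed.

Lemma germ_eq_refl j (g : germ X Y j) : germ_eq g g.
Proof. exists (gi g), (idm _), (idm _). reflexivity. Qed.

Lemma germ_eq_sym j (g g' : germ X Y j) : germ_eq g g' -> germ_eq g' g.
Proof. intros [k [u [u' H]]]. exists k, u', u. intros; symmetry; apply H. Qed.

Lemma germ_eq_trans j (g g' g'' : germ X Y j) : germ_eq g g' -> germ_eq g' g'' -> germ_eq g g''.
Proof.
  intros [k [u [u' H]]] [k' [w [w' H']]].
  destruct (filtered_complete_span (pidx_filt X) u' w) as [m [p [q E]]].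
  exists m, (cmp p u), (cmp q w'). intros x.
  rewrite <- !pmap_cmp, H, !pmap_cmp, E, <- !pmap_cmp, H'. reflexivity.
Qed.

Lemma germ_eq_restrict j (g : germ X Y j) m (a : hom (gi g) m) :
  germ_eq g (Germ m (fun x => gf g (pmap X a x)) (ishom_comp (gh g) (pmap_hom X a))).
Proof. exists m, a, (idm m). intros x; simpl. rewrite pmap_id. reflexivity. Qed.

Lemma germ_eq_ext j i (f f' : car C (pobj X i) -> car C (pobj Y j)) h h' :
  (forall x, f x = f' x) -> germ_eq (Germ i f h) (Germ i f' h').
Proof. intros H. exists i, (idm i), (idm i). intros; apply H. Qed.

Lemma germ_eq_postcomp (Z : prosys C) j (k : pidx Z) (h : car C (pobj Y j) -> car C (pobj Z k))
  (hh : ishom h) (g1 g2 : germ X Y j) :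
  germ_eq g1 g2 ->
  germ_eq (Germ (gi g1) (fun x => h (gf g1 x)) (ishom_comp hh (gh g1)))
          (Germ (gi g2) (fun x => h (gf g2 x)) (ishom_comp hh (gh g2))).
Proof. intros [m [u [u' E]]]. exists m, u, u'. intros x; simpl. rewrite E. reflexivity. Qed.

Lemma germ_eq_post j j' (v : hom j j') (g g' : germ X Y j') :
  germ_eq g g' -> germ_eq (germ_post v g) (germ_post v g').
Proof. apply (germ_eq_postcomp (pmap_hom Y v)). Qed.

Lemma pro_eq_sym (phi psi : premor X Y) : pro_eq phi psi -> pro_eq psi phi.
Proof. intros H j; apply germ_eq_sym, H. Qed.

Lemma pro_eq_trans (phi psi chi : premor X Y) : pro_eq phi psi -> pro_eq psi chi -> pro_eq phi chi.
Proof. intros H H' j; eapply germ_eq_trans; [apply H | apply H']. Qed.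

Lemma promor_pro_eq (phi psi : premor X Y) : is_promor phi -> pro_eq phi psi -> is_promor psi.
Proof.
  intros Hp He j j' v.
  eapply germ_eq_trans; [apply germ_eq_post, germ_eq_sym, He |].
  eapply germ_eq_trans; [apply Hp | apply He].
Qed.
End Germs.

Section ProCategory.
Variable C : ccat.

Lemma pcompA (W X Y Z : prosys C) (h : premor Y Z) (g : premor X Y) (f : premor W X) :
  pro_eq (pcomp h (pcomp g f)) (pcomp (pcomp h g) f).
Proof. intros k. exists _, (idm _), (idm _). reflexivity. Qed.

Lemma pcomp_id_l (X Y : prosys C) (f : premor X Y) : pro_eq (pcomp (pid Y) f) f.
Proof. intros k. exists _, (idm _), (idm _). reflexivity. Qed.

Lemma pcomp_eq_r (X Y Z : prosys C) (g : premor Y Z) (f f' : premor X Y) :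
  pro_eq f f' -> pro_eq (pcomp g f) (pcomp g f').
Proof. intros H k. apply (germ_eq_postcomp (gh (g k)) (H (gi (g k)))). Qed.

Lemma pcomp_eq_l (X Y Z : prosys C) (g g' : premor Y Z) (f : premor X Y) :
  is_promor f -> pro_eq g g' -> pro_eq (pcomp g f) (pcomp g' f).
Proof.
  intros Hf H k. destruct (H k) as [m [u [u' E]]].
  eapply germ_eq_trans; [apply germ_eq_sym, (germ_eq_postcomp (gh (g k)) (Hf _ _ u)) |].
  eapply germ_eq_trans; [| apply (germ_eq_postcomp (gh (g' k)) (Hf _ _ u'))].
  apply germ_eq_ext. intros x. apply E.
Qed.

Lemma promor_pcomp (X Y Z : prosys C) (g : premor Y Z) (f : premor X Y) :
  is_promor g -> is_promor f -> is_promor (pcomp g f).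
Proof.
  intros Hg Hf j j' v. destruct (Hg j j' v) as [m [u [u' E]]].
  eapply germ_eq_trans;
    [apply germ_eq_sym, (germ_eq_postcomp (gh (germ_post v (g j'))) (Hf _ _ u)) |].
  eapply germ_eq_trans; [| apply (germ_eq_postcomp (gh (g j)) (Hf _ _ u'))].
  apply germ_eq_ext. intros x. apply E.
Qed.

Lemma pcomp_inverse (X Y Z : prosys C) (f1 : premor X Y) (g1 : premor Y X)
  (f2 : premor Y Z) (g2 : premor Z Y) :
  is_promor f1 -> pro_eq (pcomp g1 f1) (pid X) -> pro_eq (pcomp g2 f2) (pid Y) ->
  pro_eq (pcomp (pcomp g1 g2) (pcomp f2 f1)) (pid X).
Proof.
  intros Hf1 E1 E2.
  eapply pro_eq_trans; [apply pro_eq_sym, pcompA |].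
  eapply pro_eq_trans; [apply pcomp_eq_r, pcompA |].
  eapply pro_eq_trans; [apply pcomp_eq_r, pcomp_eq_l; [exact Hf1 | exact E2] |].
  eapply pro_eq_trans; [apply pcomp_eq_r, pcomp_id_l | exact E1].
Qed.

Lemma pro_iso_trans (X Y Z : prosys C) : pro_iso X Y -> pro_iso Y Z -> pro_iso X Z.
Proof.
  intros [f1 [g1 [Hf1 [Hg1 [E1 E1']]]]] [f2 [g2 [Hf2 [Hg2 [E2 E2']]]]].
  exists (pcomp f2 f1), (pcomp g1 g2).
  split; [apply promor_pcomp; assumption |]. split; [apply promor_pcomp; assumption |].
  split; apply pcomp_inverse; assumption.
Qed.
End ProCategory.

Definition eventually (C : ccat) (X : prosys C) (j : pidx X)
  (P : car C (pobj X j) -> car C (pobj X j) -> Prop) : Prop :=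
  exists n (t : hom j n), forall y y', P (pmap X t y) (pmap X t y').
Arguments eventually {C} X j P.

Lemma eventually_and (C : ccat) (X : prosys C) (j : pidx X) P Q :
  eventually X j P -> eventually X j Q -> eventually X j (fun y y' => P y y' /\ Q y y').
Proof.
  intros [n1 [t1 H1]] [n2 [t2 H2]].
  destruct (filtered_complete_span (pidx_filt X) t1 t2) as [n [p1 [p2 E]]].
  exists n, (cmp p1 t1). intros y y'. split.
  - rewrite <- !pmap_cmp. apply H1.
  - rewrite E, <- !pmap_cmp. apply H2.
Qed.

Lemma eventually_mono (C : ccat) (X : prosys C) (j : pidx X) (P Q : _ -> _ -> Prop) :
  (forall x y, P x y -> Q x y) -> eventually X j P -> eventually X j Q.
Proof. intros H [n [t Ht]]. exists n, t. intros y y'. apply H, Ht. Qed.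

(* Germs out of a pro-set are compared by rewriting both sides to germs at a common level
   with explicit maps ([_nf] lemmas below), and comparing these maps. *)
Lemma germ_eq_by_nf (Z Y : pset) (j : pidx Y) (g g' : germ Z Y j) (m : pidx Z)
  (F G : pobj Z m -> pobj Y j) :
  germ_eq g (Germ m F Logic.I) -> germ_eq g' (Germ m G Logic.I) -> (forall x, F x = G x) ->
  germ_eq g g'.
Proof.
  intros H1 H2 E. eapply germ_eq_trans; [exact H1 |].
  eapply germ_eq_trans; [apply germ_eq_ext, E | apply germ_eq_sym, H2].
Qed.

Lemma germ_eq_iff_of_nf (C : ccat) (X Y : prosys C) (j : pidx Y) (g g' h h' : germ X Y j) :
  germ_eq g h -> germ_eq g' h' -> (germ_eq g g' <-> germ_eq h h').
Proof.
  intros H H'. split; intros E.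
  - eapply germ_eq_trans; [apply germ_eq_sym, H |]. eapply germ_eq_trans; [exact E | exact H'].
  - eapply germ_eq_trans; [exact H |]. eapply germ_eq_trans; [exact E | apply germ_eq_sym, H'].
Qed.

Lemma ppair_nf (Z X Y : pset) (phi : premor Z X) (psi : premor Z Y) (j1 : pidx X) (j2 : pidx Y)
  (m : pidx Z) (F : pobj Z m -> pobj X j1) (G : pobj Z m -> pobj Y j2) :
  germ_eq (phi j1) (Germ m F Logic.I) -> germ_eq (psi j2) (Germ m G Logic.I) ->
  germ_eq (ppair phi psi ((j1, j2) : pidx (prod_sys X Y)))
          (@Germ SetC Z (prod_sys X Y) ((j1, j2) : pidx (prod_sys X Y)) m
              (fun z => (F z, G z) : (pobj X j1 * pobj Y j2)%type) Logic.I).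
Proof.
  intros [k1 [u1 [u1' H1]]] [k2 [u2 [u2' H2]]].
  destruct (filtered_complete_span (pidx_filt Z) u1' u2') as [K [p1 [p2 E]]].
  unfold ppair; simpl.
  destruct (common (pidx_filt Z) (gi (phi j1)) (gi (psi j2))) as [c [al be]]; simpl.
  destruct (filtered_complete_span2 (pidx_filt Z) al (cmp p1 u1) be (cmp p2 u2))
    as [k [P [Q [E1 E2]]]].
  exists k, P, (cmp Q (cmp p1 u1')). intros x; simpl in *.
  rewrite !pmap_cmp, E1, E2, !cmp_assoc, <- !pmap_cmp, H1, H2, (pmap_cmp p1 u1'),
    (pmap_cmp p2 u2'), E.
  reflexivity.
Qed.

Definition levelwise_binop (X : pset) (op : forall j, pobj X j -> pobj X j -> pobj X j)
  : premor (prod_sys X X) X :=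
  fun j => @Germ SetC (prod_sys X X) X j ((j, j) : pidx (prod_sys X X))
             (fun p : (pobj X j * pobj X j)%type => op j (fst p) (snd p)) Logic.I.

Lemma levelwise_binop_nf (Z X : pset) op (phi psi : premor Z X) (j : pidx X) (m : pidx Z)
  (F G : pobj Z m -> pobj X j) :
  germ_eq (phi j) (Germ m F Logic.I) -> germ_eq (psi j) (Germ m G Logic.I) ->
  germ_eq (pcomp (levelwise_binop op) (ppair phi psi) j)
          (@Germ SetC Z X j m (fun z => op j (F z) (G z)) Logic.I).
Proof.
  intros H1 H2.
  exact (@germ_eq_postcomp SetC Z (prod_sys X X) X ((j, j) : pidx (prod_sys X X)) j
           (fun p : (pobj X j * pobj X j)%type => op j (fst p) (snd p)) Logic.I _ _
           (ppair_nf H1 H2)).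
Qed.

Section ProductDiagonal.
Variables X W : pset.
Let X2 := prod_sys X X.

Lemma germ_eq_iff_eventually (j : pidx X) (j' : pidx W) (m : pidx X) (a : hom j m)
  (P Q : pobj X j -> pobj W j') :
  germ_eq (@Germ SetC X W j' m (fun z => P (pmap X a z)) Logic.I)
          (@Germ SetC X W j' m (fun z => Q (pmap X a z)) Logic.I) <->
  eventually X j (fun y _ => P y = Q y).
Proof.
  split.
  - intros [k [u [u' H]]]; simpl in u, u', H.
    destruct (filtered_coequalize (pidx_filt X) (cmp u a) (cmp u' a)) as [n [w E]].
    exists n, (cmp w (cmp u a)). intros y _.
    specialize (H (pmap X w y)). rewrite !pmap_cmp, <- E in H. exact H.
  - intros [n [t H]].
    destruct (filtered_complete_span (pidx_filt X) a t) as [k [p [q E]]].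
    exists k, p, p. intros x; simpl. rewrite !pmap_cmp, E, <- !pmap_cmp. exact (H _ (pmap X q x)).
Qed.

Lemma germ_eq_pair_iff_eventually (j : pidx X) (j' : pidx W) (m : pidx X2)
  (a : hom (c0 := pidx X2) (j, j) m) (P Q : (pobj X j * pobj X j)%type -> pobj W j') :
  germ_eq (@Germ SetC X2 W j' m (fun z => P (pmap X2 a z)) Logic.I)
          (@Germ SetC X2 W j' m (fun z => Q (pmap X2 a z)) Logic.I) <->
  eventually X j (fun y y' => P (y, y') = Q (y, y')).
Proof.
  destruct m as [m1 m2], a as [a1 a2]; simpl in a1, a2. split.
  - intros [[k1 k2] [[u1 u2] [[u1' u2'] H]]]; simpl in *.
    destruct (filtered_coequalize2 (pidx_filt X) (cmp u1 a1) (cmp u1' a1) (cmp u2 a2) (cmp u2' a2))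
      as [n [p1 [p2 [E1 [E2 E3]]]]].
    exists n, (cmp p2 (cmp u2 a2)). intros y y'.
    specialize (H (pmap X p1 y, pmap X p2 y')); simpl in H.
    rewrite !pmap_cmp, E1, E2, E3 in H. exact H.
  - intros [n [t H]].
    destruct (filtered_complete_span (pidx_filt X) a1 t) as [k1 [p1 [q1 E1]]].
    destruct (filtered_complete_span (pidx_filt X) a2 t) as [k2 [p2 [q2 E2]]].
    exists ((k1, k2) : pidx X2), ((p1, p2) : hom (c0 := pidx X2) (m1, m2) (k1, k2)),
           ((p1, p2) : hom (c0 := pidx X2) (m1, m2) (k1, k2)).
    intros [x1 x2]; simpl. rewrite !pmap_cmp, E1, E2, <- !pmap_cmp. apply H.
Qed.
End ProductDiagonal.

Section ImageRingObject.
Variable R : prosys RngC.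
Local Notation X := (ro_X (img_rng R)).

Lemma img_add_nf (Z : pset) (phi psi : premor Z X) (j : pidx X) (m : pidx Z)
  (F G : pobj Z m -> pobj X j) :
  germ_eq (phi j) (Germ m F Logic.I) -> germ_eq (psi j) (Germ m G Logic.I) ->
  germ_eq (pcomp (ro_add (img_rng R)) (ppair phi psi) j)
          (@Germ SetC Z X j m (fun z => radd (F z) (G z)) Logic.I).
Proof. exact (@levelwise_binop_nf Z X (fun j => @radd (pobj R j)) phi psi j m F G). Qed.

Lemma img_mul_nf (Z : pset) (phi psi : premor Z X) (j : pidx X) (m : pidx Z)
  (F G : pobj Z m -> pobj X j) :
  germ_eq (phi j) (Germ m F Logic.I) -> germ_eq (psi j) (Germ m G Logic.I) ->
  germ_eq (pcomp (ro_mul (img_rng R)) (ppair phi psi) j)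
          (@Germ SetC Z X j m (fun z => rmul (F z) (G z)) Logic.I).
Proof. exact (@levelwise_binop_nf Z X (fun j => @rmul (pobj R j)) phi psi j m F G). Qed.

Ltac img_nf :=
  repeat match goal with
  | |- germ_eq (pcomp (ro_add _) (ppair _ _) _) _ => apply img_add_nf
  | |- germ_eq (pcomp (ro_mul _) (ppair _ _) _) _ => apply img_mul_nf
  | a : hom (gi ?g) _ |- germ_eq ?g _ => exact (germ_eq_restrict a)
  | a : hom ?j _ |- germ_eq (?g ?j) _ => exact (germ_eq_restrict (g := g j) a)
  end.

Ltac img_law3 law :=
  intros j;
  let X3 := constr:(prod_sys (prod_sys X X) X) in
  destruct (filtered_cocone3 (pidx_filt X3)
              (gi (pcomp (pr1 X X) (pr1 (prod_sys X X) X) j))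
              (gi (pcomp (pr2 X X) (pr1 (prod_sys X X) X) j))
              (gi (pr2 (prod_sys X X) X j))) as [m [a1 [a2 [a3 _]]]];
  eapply germ_eq_by_nf with (m := m); [img_nf | img_nf | intros; apply law].

Lemma levelwise_promor_binop op :
  (forall j j' (v : hom j j') x y, pmap R v (op j' x y) = op j (pmap R v x) (pmap R v y)) ->
  is_promor (levelwise_binop (X := X) op).
Proof.
  intros Hop j j' v.
  exists ((j', j') : pidx (prod_sys X X)), (idm _),
    ((v, v) : hom (c0 := pidx (prod_sys X X)) (j, j) (j', j')).
  intros [x y]; simpl. rewrite !pmap_id. apply Hop.
Qed.

Lemma rngobj_img : is_rngobj (img_rng R).
Proof.
  repeat split.
  - apply levelwise_promor_binop. intros j j' v. apply (pmap_hom R v).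
  - intros j j' v. exists tt, tt, tt. intros x. apply (pmap_hom R v).
  - intros j j' v. exists j', (idm _), v. intros x; simpl. rewrite !pmap_id. apply (pmap_hom R v).
  - apply levelwise_promor_binop. intros j j' v. apply (pmap_hom R v).
  - img_law3 raddA.
  - intros j.
    destruct (common (pidx_filt (prod_sys X X)) (gi (pr1 X X j)) (gi (pr2 X X j))) as [m [a1 a2]].
    pose (a := (fst a1, snd a2) : hom (c0 := pidx (prod_sys X X)) (j, j) m).
    eapply germ_eq_by_nf with (m := m);
      [img_nf | exact (germ_eq_restrict (g := ro_add (img_rng R) j) a) |].
    intros x. apply raddC.
  - intros j.
    destruct (common (pidx_filt X) (gi (pcomp (ro_zero (img_rng R)) (bang X) j)) j) as [m [a1 a2]].
    eapply germ_eq_by_nf with (m := m); [img_nf | img_nf |]. intros x. apply radd0.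
  - intros j.
    destruct (common (pidx_filt X) j (gi (pcomp (ro_zero (img_rng R)) (bang X) j))) as [m [a1 a2]].
    eapply germ_eq_by_nf with (m := m); [img_nf | img_nf |]. intros x. apply raddN.
  - img_law3 rmulA.
  - img_law3 rmulDr.
  - img_law3 rmulDl.
Qed.
End ImageRingObject.

Definition ess_comm (R : prosys RngC) : Prop :=
  forall j, eventually R j (fun x y => rmul x y = rmul y x).

Definition compatible (R : prosys RngC) (e : forall j, pobj R j) : Prop :=
  forall j j' (v : hom j j'), pmap R v (e j') = e j.

Definition ess_unit (R : prosys RngC) (e : forall j, pobj R j) : Prop :=
  forall j, eventually R j (fun x _ => rmul (e j) x = x /\ rmul x (e j) = x).

Arguments compatible : clear implicits.
Arguments ess_unit : clear implicits.

Section ImageCommUnit.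
Variable R : prosys RngC.
Local Notation X := (ro_X (img_rng R)).
Local Notation X2 := (prod_sys X X).

Lemma img_comm_iff : ro_comm (img_rng R) <-> ess_comm R.
Proof.
  assert (H : forall j, germ_eq (pcomp (ro_mul (img_rng R)) (ppair (pr2 X X) (pr1 X X)) j)
                                (ro_mul (img_rng R) j) <->
                        eventually R j (fun x y => rmul y x = rmul x y)).
  { intros j.
    destruct (common (pidx_filt X) j (some_idx (pidx_filt X))) as [c1 [al be]].
    destruct (common (pidx_filt X) (some_idx (pidx_filt X)) j) as [c2 [ga de]].
    pose (a := (al, de) : hom (c0 := pidx X2) (j, j) (c1, c2)).
    assert (L : germ_eq (pcomp (ro_mul (img_rng R)) (ppair (pr2 X X) (pr1 X X)) j)
       (@Germ SetC X2 X j ((c1, c2) : pidx X2)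
          (fun z => (fun p : (pobj X j * pobj X j)%type => rmul (snd p) (fst p)) (pmap X2 a z))
          Logic.I)).
    { apply img_mul_nf.
      - exact (germ_eq_restrict (g := pr2 X X j) ((be, de) : hom (c0 := pidx X2) (_, j) (c1, c2))).
      - exact (germ_eq_restrict (g := pr1 X X j) ((al, ga) : hom (c0 := pidx X2) (j, _) (c1, c2))). }
    rewrite <- (germ_eq_pair_iff_eventually (W := X) (j' := j) a
                  (fun p => rmul (snd p) (fst p)) (fun p => rmul (fst p) (snd p))).
    exact (germ_eq_iff_of_nf L (germ_eq_restrict (g := ro_mul (img_rng R) j) a)). }
  split; intros Hc j.
  - eapply eventually_mono; [| apply H, Hc]. intros x y E. symmetry. exact E.
  - apply H. eapply eventually_mono; [| apply Hc]. intros x y E. symmetry. exact E.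
Qed.

Definition unit_family (E : premor One X) (j : pidx R) : pobj R j := gf (E j) tt.

Definition unit_premor (e : forall j, pobj R j) : premor One X :=
  fun j => @Germ SetC One X j (tt : pidx One) (fun _ => e j) Logic.I.

Lemma promor_unit_iff (E : premor One X) : is_promor E <-> compatible R (unit_family E).
Proof.
  split.
  - intros H j j' v. destruct (H j j' v) as [k [u [u' Hk]]]. exact (Hk tt).
  - intros H j j' v. exists tt, tt, tt. intros []. simpl.
    destruct (gi (E j')), (gi (E j)). apply H.
Qed.

Lemma img_unit_law_iff (E : premor One X) (j : pidx X) (left : bool) :
  germ_eq (pcomp (ro_mul (img_rng R))
             (if left then ppair (pcomp E (bang X)) (pid X) else ppair (pid X) (pcomp E (bang X))) j)
          (pid X j) <->
  eventually R j (fun x _ => (if left then rmul (unit_family E j) x else rmul x (unit_family E j)) = x).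
Proof.
  destruct (common (pidx_filt X) (some_idx (pidx_filt X)) j) as [c [al be]].
  rewrite <- (germ_eq_iff_eventually (W := X) (j' := j) be
                (fun x => if left then rmul (unit_family E j) x else rmul x (unit_family E j))
                (fun x => x)).
  apply germ_eq_iff_of_nf; [| exact (germ_eq_restrict (g := pid X j) be)].
  destruct left; apply img_mul_nf;
    solve [exact (germ_eq_restrict (g := pid X j) be)
          | exact (germ_eq_restrict (g := pcomp E (bang X) j) al)].
Qed.

Lemma img_unit_laws_iff (E : premor One X) :
  ro_unit_laws (img_rng R) E <-> compatible R (unit_family E) /\ ess_unit R (unit_family E).
Proof.
  unfold ro_unit_laws, ess_unit. rewrite promor_unit_iff.
  split.
  - intros [Hc [Hl Hr]]. split; [exact Hc |]. intros j.
    apply eventually_and; [apply (img_unit_law_iff E j true) | apply (img_unit_law_iff E j false)];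
      [apply Hl | apply Hr].
  - intros [Hc Hu]. split; [exact Hc | split]; intros j;
      [apply (img_unit_law_iff E j true) | apply (img_unit_law_iff E j false)];
      (eapply eventually_mono; [| apply Hu]); intros x y H; apply H.
Qed.
End ImageCommUnit.

Section ImageMorphisms.
Variables R S : prosys RngC.
Local Notation XR := (ro_X (img_rng R)).
Local Notation XS := (ro_X (img_rng S)).
Local Notation X2 := (prod_sys XR XR).
Variable g : premor XR XS.

Lemma img_mor_binop_eventually (opR : forall i, pobj R i -> pobj R i -> pobj R i)
  (opS : forall j, pobj S j -> pobj S j -> pobj S j) (j : pidx S) :
  pro_eq (pcomp g (levelwise_binop (X := XR) opR))
         (pcomp (levelwise_binop (X := XS) opS) (pprod_map g)) ->
  eventually R (gi (g j))
    (fun y y' => gf (g j) (opR _ y y') = opS j (gf (g j) y) (gf (g j) y')).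
Proof.
  intros H. set (i := gi (g j)).
  destruct (common (pidx_filt XR) i (some_idx (pidx_filt XR))) as [c1 [al be]].
  destruct (common (pidx_filt XR) (some_idx (pidx_filt XR)) i) as [c2 [ga de]].
  pose (a := (al, de) : hom (c0 := pidx X2) (i, i) (c1, c2)).
  apply (germ_eq_pair_iff_eventually (W := XS) (j' := j) a
           (fun p => gf (g j) (opR i (fst p) (snd p)))
           (fun p => opS j (gf (g j) (fst p)) (gf (g j) (snd p)))).
  refine (proj1 (germ_eq_iff_of_nf _ _) (H j)).
  - exact (germ_eq_restrict (g := pcomp g (levelwise_binop (X := XR) opR) j) a).
  - apply levelwise_binop_nf.
    + exact (germ_eq_restrict (g := pcomp g (pr1 XR XR) j)
               ((al, ga) : hom (c0 := pidx X2) (i, _) (c1, c2))).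
    + exact (germ_eq_restrict (g := pcomp g (pr2 XR XR) j)
               ((be, de) : hom (c0 := pidx X2) (_, i) (c1, c2))).
Qed.

Lemma img_mor_eventually_rng_hom :
  is_rngobj_mor (img_rng R) (img_rng S) g -> forall j,
  exists n (t : hom (gi (g j)) n), @rng_hom (pobj R n) (pobj S j) (fun y => gf (g j) (pmap R t y)).
Proof.
  intros [_ [HA [HZ [HN HM]]]] j.
  pose proof (img_mor_binop_eventually (opR := fun i => @radd (pobj R i))
                (opS := fun j => @radd (pobj S j)) j HA) as EA.
  pose proof (img_mor_binop_eventually (opR := fun i => @rmul (pobj R i))
                (opS := fun j => @rmul (pobj S j)) j HM) as EM.
  assert (EN : eventually R (gi (g j)) (fun y _ => gf (g j) (rneg y) = rneg (gf (g j) y))).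
  { apply (germ_eq_iff_eventually (W := XS) (j' := j) (idm _)
             (fun y : pobj XR (gi (g j)) => gf (g j) (rneg y)) (fun y => rneg (gf (g j) y))).
    refine (proj1 (germ_eq_iff_of_nf _ _) (HN j)).
    - exact (germ_eq_restrict (g := pcomp g (ro_neg (img_rng R)) j) (idm _)).
    - exact (germ_eq_restrict (g := pcomp (ro_neg (img_rng S)) g j) (idm _)). }
  assert (EZ : gf (g j) rzero = rzero).
  { destruct (HZ j) as [k [u [u' Hk]]]. exact (Hk tt). }
  destruct (eventually_and (eventually_and EA EM) EN) as [n [t Ht]].
  exists n, t. destruct (pmap_hom R t) as [h1 [h2 [h3 h4]]].
  split; [| split; [| split]]; intros.
  - rewrite h1. apply (Ht x y).
  - rewrite h2. exact EZ.
  - rewrite h3. apply (Ht x x).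
  - rewrite h4. apply (Ht x y).
Qed.
End ImageMorphisms.

Lemma premor_of_eventual_homs (C : ccat) (X Y : prosys C) (i : pidx Y -> pidx X)
  (f : forall j, car C (pobj X (i j)) -> car C (pobj Y j)) :
  (forall j, exists n (t : hom (i j) n), ishom (fun y => f j (pmap X t y))) ->
  exists phi : premor X Y, forall j,
    exists k (u : hom (gi (phi j)) k) (u' : hom (i j) k),
      forall x, gf (phi j) (pmap X u x) = f j (pmap X u' x).
Proof.
  intros H.
  pose (N j := constructive_indefinite_description _ (H j)).
  pose (T j := constructive_indefinite_description _ (proj2_sig (N j))).
  exists (fun j => Germ (proj1_sig (N j)) (fun y => f j (pmap X (proj1_sig (T j)) y))
                   (proj2_sig (T j))).
  intros j. exists (proj1_sig (N j)), (idm _), (proj1_sig (T j)). intros x; simpl.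
  rewrite pmap_id. reflexivity.
Qed.

Lemma img_ring_mor_eventually_ring_hom (R S : prosys RingC) g :
  is_uringobj_mor (img_ring R) (img_ring S) g -> forall j,
  exists n (t : hom (gi (g j)) n), @ring_hom (pobj R n) (pobj S j) (fun y => gf (g j) (pmap R t y)).
Proof.
  intros [Hg H1] j. destruct (img_mor_eventually_rng_hom Hg j) as [n [t Ht]].
  exists n, t. split; [exact Ht |]. simpl.
  destruct (H1 j) as [k [u [u' Hk]]]. specialize (Hk tt); simpl in Hk.
  rewrite <- Hk. f_equal. apply (pmap_hom R t).
Qed.

Lemma img_rng_fully_faithful : FF_ProRng_RngObj.
Proof.
  intros R S. split.
  - intros phi psi _ _ H j. exact (H j).
  - intros g Hg.
    destruct (@premor_of_eventual_homs RngC R S (fun j => gi (g j)) (fun j => gf (g j))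
                (img_mor_eventually_rng_hom Hg)) as [phi E].
    change (pro_eq (pro_map_mor (USet RngC) phi) g) in E.
    exists phi. split; [exact (promor_pro_eq (proj1 Hg) (pro_eq_sym E)) | exact E].
Qed.

Lemma img_ring_fully_faithful : FF_ProRing_RingObj.
Proof.
  intros R S. split.
  - intros phi psi _ _ H j. exact (H j).
  - intros g Hg.
    destruct (@premor_of_eventual_homs RingC R S (fun j => gi (g j)) (fun j => gf (g j))
                (img_ring_mor_eventually_ring_hom Hg)) as [phi E].
    change (pro_eq (pro_map_mor (USet RngC) (pro_map_mor F_Ring_Rng phi)) g) in E.
    exists phi. split; [exact (promor_pro_eq (proj1 (proj1 Hg)) (pro_eq_sym E)) | exact E].
Qed.

Lemma img_crng_fully_faithful : FF_ProCRng_CRngObj.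
Proof.
  intros R S. split.
  - intros phi psi _ _ H j. exact (H j).
  - intros g Hg.
    destruct (proj2 (img_rng_fully_faithful _ _) g Hg) as [phi [Hp He]].
    exists (fun j => @Germ CRngC R S j (gi (phi j)) (gf (phi j)) (gh (phi j))).
    split; [exact Hp | exact He].
Qed.

Lemma img_cring_fully_faithful : FF_ProCRing_CRingObj.
Proof.
  intros R S. split.
  - intros phi psi _ _ H j. exact (H j).
  - intros g Hg.
    destruct (proj2 (img_ring_fully_faithful _ _) g Hg) as [phi [Hp He]].
    exists (fun j => @Germ CRingC R S j (gi (phi j)) (gf (phi j)) (gh (phi j))).
    split; [exact Hp | exact He].
Qed.

Lemma pro_forget_comm_rng_fully_faithful : pro_fully_faithful F_CRng_Rng.
Proof.
  intros X Y. split.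
  - intros phi psi _ _ H j. exact (H j).
  - intros g Hg. exists (fun j => @Germ CRngC X Y j (gi (g j)) (gf (g j)) (gh (g j))).
    split; [exact Hg | intros j; exists (gi (g j)), (idm _), (idm _); reflexivity].
Qed.

Lemma pro_forget_comm_ring_fully_faithful : pro_fully_faithful F_CRing_Ring.
Proof.
  intros X Y. split.
  - intros phi psi _ _ H j. exact (H j).
  - intros g Hg. exists (fun j => @Germ CRingC X Y j (gi (g j)) (gf (g j)) (gh (g j))).
    split; [exact Hg | intros j; exists (gi (g j)), (idm _), (idm _); reflexivity].
Qed.

Lemma crngobj_rngobj_fully_faithful : FF_CRngObj_RngObj.
Proof. intros A B _ _ f. reflexivity. Qed.

Lemma cringobj_ringobj_fully_faithful : FF_CRingObj_RingObj.
Proof. intros A B _ _ f. reflexivity. Qed.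

Section EventualArrow.
Variables (C : ccat) (X : prosys C) (j : pidx X) (P : car C (pobj X j) -> car C (pobj X j) -> Prop).
Hypothesis H : eventually X j P.

Definition ev_level : pidx X := proj1_sig (constructive_indefinite_description _ H).

Definition ev_arrow : hom j ev_level :=
  proj1_sig (constructive_indefinite_description _
               (proj2_sig (constructive_indefinite_description _ H))).

Lemma ev_arrow_spec y y' : P (pmap X ev_arrow y) (pmap X ev_arrow y').
Proof.
  exact (proj2_sig (constructive_indefinite_description _
                      (proj2_sig (constructive_indefinite_description _ H))) y y').
Qed.
End EventualArrow.
Arguments ev_level {C X j P} H.
Arguments ev_arrow {C X j P} H.
Arguments ev_arrow_spec {C X j P} H y y'.

Lemma sig_ext (A : Type) (P : A -> Prop) (a b : {x : A | P x}) : proj1_sig a = proj1_sig b -> a = b.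
Proof. destruct a as [a Ha], b as [b Hb]; simpl; intros ->. f_equal. apply proof_irrelevance. Qed.

Section RngTheory.
Variable A : rng.

Lemma radd_cancel_r (a b c : A) : radd a c = radd b c -> a = b.
Proof.
  intros H.
  assert (K : forall x : A, radd (radd x c) (rneg c) = x).
  { intros x. rewrite raddA, (raddC c), raddN, raddC, radd0. reflexivity. }
  rewrite <- (K a), H, K. reflexivity.
Qed.

Lemma rmul0r (x : A) : rmul x rzero = rzero.
Proof. apply (radd_cancel_r (c := rmul x rzero)). rewrite <- rmulDr, !radd0. reflexivity. Qed.

Lemma rmul0l (x : A) : rmul rzero x = rzero.
Proof. apply (radd_cancel_r (c := rmul rzero x)). rewrite <- rmulDl, !radd0. reflexivity. Qed.

Lemma rmulNr (x y : A) : rmul x (rneg y) = rneg (rmul x y).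
Proof.
  apply (radd_cancel_r (c := rmul x y)). rewrite <- rmulDr, !raddN, rmul0r. reflexivity.
Qed.

Lemma rmulNl (x y : A) : rmul (rneg x) y = rneg (rmul x y).
Proof.
  apply (radd_cancel_r (c := rmul x y)). rewrite <- rmulDl, !raddN, rmul0l. reflexivity.
Qed.
End RngTheory.

(* Up to restriction, each transition map of [R] factors as [psi_j o phi] through a level
   of [D], and [psi_j] is a ring homomorphism. *)
Lemma pro_iso_ess_comm (R D : prosys RngC) :
  (forall i (x y : pobj D i), rmul x y = rmul y x) -> pro_iso R D -> ess_comm R.
Proof.
  intros Hc [phi [psi [_ [_ [H _]]]]] j. destruct (H j) as [k [u [u' Hk]]]. simpl in u, u', Hk.
  exists k, u'. intros y y'. rewrite <- !Hk.
  destruct (gh (psi j)) as [_ [_ [_ Hm]]]. rewrite <- !Hm, Hc. reflexivity.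
Qed.

Lemma pro_iso_ess_unit (R D : prosys RngC) (one : forall i, pobj D i) :
  (forall i x, rmul (one i) x = x /\ rmul x (one i) = x) -> compatible D one ->
  pro_iso R D -> exists e, compatible R e /\ ess_unit R e.
Proof.
  intros Hone Hmap [phi [psi [_ [Hpsi [H _]]]]].
  exists (fun j => gf (psi j) (one (gi (psi j)))). split.
  - intros j j' v. destruct (Hpsi j j' v) as [k [a [b Hk]]]. simpl in a, b, Hk.
    specialize (Hk (one k)). rewrite !Hmap in Hk. exact Hk.
  - intros j. destruct (H j) as [k [u [u' Hk]]]. simpl in u, u', Hk.
    exists k, u'. intros y _. rewrite <- !Hk.
    destruct (gh (psi j)) as [_ [_ [_ Hm]]]. rewrite <- !Hm, (proj1 (Hone _ _)), (proj2 (Hone _ _)).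
    split; reflexivity.
Qed.

(* The abelianization of a rng [A] is its quotient by the relation "identified by every
   homomorphism into a commutative rng", built as the type of equivalence classes. *)
Section Abelianization.
Variable A : rng.

Definition ab_rel (x y : A) : Prop := forall (T : crng) (h : A -> T), rng_hom h -> h x = h y.
Definition ab_carrier := {P : A -> Prop | exists x, P = ab_rel x}.
Definition ab_in (x : A) : ab_carrier := exist _ (ab_rel x) (ex_intro _ x eq_refl).
Definition ab_rep (q : ab_carrier) : A :=
  proj1_sig (constructive_indefinite_description _ (proj2_sig q)).

Lemma ab_in_rep q : ab_in (ab_rep q) = q.
Proof.
  apply sig_ext. unfold ab_rep. destruct (constructive_indefinite_description _ _) as [x Hx].
  symmetry. exact Hx.
Qed.

Lemma ab_in_surj (q : ab_carrier) : exists x, q = ab_in x.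
Proof. exists (ab_rep q). symmetry; apply ab_in_rep. Qed.

Lemma ab_in_eq x y : ab_rel x y -> ab_in x = ab_in y.
Proof.
  intros H. apply sig_ext, functional_extensionality. intros z. simpl.
  apply propositional_extensionality. split; intros H' T h hh.
  - rewrite <- (H T h hh). apply H', hh.
  - rewrite (H T h hh). apply H', hh.
Qed.

Lemma ab_rel_of_in_eq x y : ab_in x = ab_in y -> ab_rel x y.
Proof.
  intros H. apply (f_equal (@proj1_sig _ _)) in H. simpl in H.
  rewrite H. intros T h _. reflexivity.
Qed.

Lemma ab_rel_rep x : ab_rel (ab_rep (ab_in x)) x.
Proof. apply ab_rel_of_in_eq, ab_in_rep. Qed.

Definition ab_add (a b : ab_carrier) : ab_carrier := ab_in (radd (ab_rep a) (ab_rep b)).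
Definition ab_zero : ab_carrier := ab_in rzero.
Definition ab_neg (a : ab_carrier) : ab_carrier := ab_in (rneg (ab_rep a)).
Definition ab_mul (a b : ab_carrier) : ab_carrier := ab_in (rmul (ab_rep a) (ab_rep b)).

Lemma ab_add_in x y : ab_add (ab_in x) (ab_in y) = ab_in (radd x y).
Proof.
  apply ab_in_eq. intros T h hh. pose proof hh as [h1 _].
  rewrite !h1, (ab_rel_rep x hh), (ab_rel_rep y hh). reflexivity.
Qed.

Lemma ab_neg_in x : ab_neg (ab_in x) = ab_in (rneg x).
Proof.
  apply ab_in_eq. intros T h hh. pose proof hh as [_ [_ [h3 _]]].
  rewrite !h3, (ab_rel_rep x hh). reflexivity.
Qed.

Lemma ab_mul_in x y : ab_mul (ab_in x) (ab_in y) = ab_in (rmul x y).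
Proof.
  apply ab_in_eq. intros T h hh. pose proof hh as [_ [_ [_ h4]]].
  rewrite !h4, (ab_rel_rep x hh), (ab_rel_rep y hh). reflexivity.
Qed.

Definition ab_rng : rng.
Proof.
  refine (@Rng ab_carrier ab_add ab_zero ab_neg ab_mul _ _ _ _ _ _ _); intros;
  repeat match goal with
         | q : ab_carrier |- _ => let x := fresh "x" in destruct (ab_in_surj q) as [x ->]; clear q
         end;
  unfold ab_zero; rewrite ?ab_add_in, ?ab_neg_in, ?ab_mul_in, ?ab_add_in, ?ab_mul_in,
    ?ab_add_in, ?ab_mul_in; f_equal.
  - apply raddA.
  - apply raddC.
  - apply radd0.
  - apply raddN.
  - apply rmulA.
  - apply rmulDr.
  - apply rmulDl.
Defined.

Lemma ab_mulC (x y : ab_rng) : rmul x y = rmul y x.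
Proof.
  change (ab_mul x y = ab_mul y x).
  destruct (ab_in_surj x) as [a ->], (ab_in_surj y) as [b ->]. rewrite !ab_mul_in.
  apply ab_in_eq. intros T h [_ [_ [_ h4]]]. rewrite !h4. apply crng_comm.
Qed.

Definition ab_crng : crng := @CRng ab_rng ab_mulC.

Lemma ab_in_hom : @rng_hom A ab_rng ab_in.
Proof.
  split; [| split; [| split]]; intros; simpl.
  - symmetry; apply ab_add_in.
  - reflexivity.
  - symmetry; apply ab_neg_in.
  - symmetry; apply ab_mul_in.
Qed.
End Abelianization.

Definition ab_ring (A : ring) : ring.
Proof.
  refine (@Ring (ab_rng A) (ab_in (rone A)) _ _); intros x;
  change (ab_carrier A) in x; destruct (ab_in_surj x) as [a ->].
  - change (ab_mul (ab_in (rone A)) (ab_in a) = ab_in a). rewrite ab_mul_in, rmul1l. reflexivity.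
  - change (ab_mul (ab_in a) (ab_in (rone A)) = ab_in a). rewrite ab_mul_in, rmul1r. reflexivity.
Defined.

Definition ab_cring (A : ring) : cring := @CRing (ab_ring A) (@ab_mulC A).

(* A homomorphism whose image commutes identifies [ab_rel]-related elements, since it
   corestricts to a homomorphism into its (commutative) image. *)
Section CommutativeImage.
Variables (A B : rng) (f : A -> B).
Hypothesis hf : rng_hom f.
Hypothesis hc : forall x y, rmul (f x) (f y) = rmul (f y) (f x).

Let Im := {z : B | exists y, z = f y}.

Definition im_add (a b : Im) : Im.
Proof.
  exists (radd (proj1_sig a) (proj1_sig b)).
  destruct a as [a [x ->]], b as [b [y ->]]. exists (radd x y). symmetry. apply hf.
Defined.
Definition im_zero : Im.
Proof. exists rzero, rzero. symmetry; apply hf. Defined.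
Definition im_neg (a : Im) : Im.
Proof.
  exists (rneg (proj1_sig a)). destruct a as [a [x ->]]. exists (rneg x). symmetry; apply hf.
Defined.
Definition im_mul (a b : Im) : Im.
Proof.
  exists (rmul (proj1_sig a) (proj1_sig b)).
  destruct a as [a [x ->]], b as [b [y ->]]. exists (rmul x y). symmetry. apply hf.
Defined.

Definition im_rng : rng.
Proof.
  refine (@Rng Im im_add im_zero im_neg im_mul _ _ _ _ _ _ _); intros; apply sig_ext; simpl.
  - apply raddA.
  - apply raddC.
  - apply radd0.
  - apply raddN.
  - apply rmulA.
  - apply rmulDr.
  - apply rmulDl.
Defined.

Lemma im_mulC (x y : im_rng) : rmul x y = rmul y x.
Proof. apply sig_ext. destruct x as [a [u ->]], y as [b [v ->]]. apply hc. Qed.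

Definition im_crng : crng := @CRng im_rng im_mulC.

Definition im_corestrict (x : A) : im_crng := exist _ (f x) (ex_intro _ x eq_refl).

Lemma im_corestrict_hom : @rng_hom A im_crng im_corestrict.
Proof. split; [| split; [| split]]; intros; apply sig_ext; simpl; apply hf. Qed.

Lemma ab_rel_comm_hom x y : ab_rel x y -> f x = f y.
Proof. intros H. exact (f_equal (@proj1_sig _ _) (H im_crng im_corestrict im_corestrict_hom)). Qed.

Lemma ab_lift_in x : f (ab_rep (ab_in x)) = f x.
Proof. apply ab_rel_comm_hom, ab_rel_rep. Qed.

Lemma ab_lift_hom : @rng_hom (ab_rng A) B (fun q => f (ab_rep q)).
Proof.
  pose proof hf as [h1 [h2 [h3 h4]]].
  split; [| split; [| split]]; intros; simpl.
  - unfold ab_add. rewrite ab_lift_in. apply h1.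
  - unfold ab_zero. rewrite ab_lift_in. apply h2.
  - unfold ab_neg. rewrite ab_lift_in. apply h3.
  - unfold ab_mul. rewrite ab_lift_in. apply h4.
Qed.
End CommutativeImage.

Definition ab_map (A B : rng) (f : A -> B) (q : ab_carrier A) : ab_carrier B := ab_in (f (ab_rep q)).

Lemma ab_map_in (A B : rng) (f : A -> B) : rng_hom f -> forall x, ab_map f (ab_in x) = ab_in (f x).
Proof.
  intros hf x. apply ab_in_eq. intros T h hh. exact (ab_rel_rep x (rng_hom_comp hh hf)).
Qed.

Lemma ab_map_hom (A B : rng) (f : A -> B) : rng_hom f -> @rng_hom (ab_rng A) (ab_rng B) (ab_map f).
Proof.
  intros hf. pose proof hf as [h1 [h2 [h3 h4]]].
  split; [| split; [| split]]; intros.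
  - change (ab_carrier A) in x, y. destruct (ab_in_surj x) as [a ->], (ab_in_surj y) as [b ->].
    change (ab_map f (ab_add (ab_in a) (ab_in b)) = ab_add (ab_map f (ab_in a)) (ab_map f (ab_in b))).
    rewrite ab_add_in, !(ab_map_in hf), ab_add_in, h1. reflexivity.
  - change (ab_map f (ab_in rzero) = ab_in rzero). rewrite (ab_map_in hf), h2. reflexivity.
  - change (ab_carrier A) in x. destruct (ab_in_surj x) as [a ->].
    change (ab_map f (ab_neg (ab_in a)) = ab_neg (ab_map f (ab_in a))).
    rewrite ab_neg_in, !(ab_map_in hf), ab_neg_in, h3. reflexivity.
  - change (ab_carrier A) in x, y. destruct (ab_in_surj x) as [a ->], (ab_in_surj y) as [b ->].
    change (ab_map f (ab_mul (ab_in a) (ab_in b)) = ab_mul (ab_map f (ab_in a)) (ab_map f (ab_in b))).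
    rewrite ab_mul_in, !(ab_map_in hf), ab_mul_in, h4. reflexivity.
Qed.

Lemma ab_map_ring_hom (A B : ring) (f : A -> B) :
  ring_hom f -> @ring_hom (ab_ring A) (ab_ring B) (ab_map f).
Proof.
  intros [hf ho]. split; [apply ab_map_hom, hf |].
  change (ab_map f (ab_in (rone A)) = ab_in (rone B)). rewrite (ab_map_in hf), ho. reflexivity.
Qed.

Definition ab_sys (R : prosys RngC) : prosys CRngC.
Proof.
  refine (@ProSys CRngC (pidx R) (pidx_filt R) (fun i => ab_crng (pobj R i))
            (fun i j u => ab_map (pmap R u)) (fun i j u => ab_map_hom (pmap_hom R u)) _ _).
  - intros i x. change (ab_carrier (pobj R i)) in x. destruct (ab_in_surj x) as [a ->].
    rewrite (ab_map_in (pmap_hom R _)), pmap_id. reflexivity.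
  - intros i j k v u x. change (ab_carrier (pobj R k)) in x. destruct (ab_in_surj x) as [a ->].
    simpl. rewrite !(ab_map_in (pmap_hom R _)), pmap_comp. reflexivity.
Defined.

Definition ab_ring_sys (D : prosys RingC) : prosys CRingC.
Proof.
  refine (@ProSys CRingC (pidx D) (pidx_filt D) (fun i => ab_cring (pobj D i))
            (fun i j u => ab_map (pmap D u)) (fun i j u => ab_map_ring_hom (pmap_hom D u)) _ _).
  - intros i x. change (ab_carrier (pobj D i)) in x. destruct (ab_in_surj x) as [a ->].
    rewrite (ab_map_in (proj1 (pmap_hom D _))), pmap_id. reflexivity.
  - intros i j k v u x. change (ab_carrier (pobj D k)) in x. destruct (ab_in_surj x) as [a ->].
    simpl. rewrite !(ab_map_in (proj1 (pmap_hom D _))), pmap_comp. reflexivity.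
Defined.

Lemma prosys_eq (C : ccat) I F o m h1 h2 h3 h1' h2' h3' :
  @ProSys C I F o m h1 h2 h3 = @ProSys C I F o m h1' h2' h3'.
Proof.
  rewrite (proof_irrelevance _ h1 h1'), (proof_irrelevance _ h2 h2'), (proof_irrelevance _ h3 h3').
  reflexivity.
Qed.

Lemma ab_ring_sys_forget (D : prosys RingC) :
  pro_map_sys F_Ring_Rng (pro_map_sys F_CRing_Ring (ab_ring_sys D)) =
  pro_map_sys F_CRng_Rng (ab_sys (pro_map_sys F_Ring_Rng D)).
Proof. apply prosys_eq. Qed.

(* If [R] is essentially commutative, the transition map into [R j] from the level chosen by
   [ess_comm] has commutative image, hence factors through the abelianization. *)
Section AbelianizationIso.
Variable R : prosys RngC.
Hypothesis HC : ess_comm R.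
Let Q := pro_map_sys F_CRng_Rng (ab_sys R).
Let t j := ev_arrow (HC j).
Let t_comm j :
  forall x y, rmul (pmap R (t j) x) (pmap R (t j) y) = rmul (pmap R (t j) y) (pmap R (t j) x)
  := ev_arrow_spec (HC j).

Definition ab_proj : premor R Q :=
  fun j => @Germ RngC R Q j j (@ab_in (pobj R j)) (ab_in_hom _).

Definition ab_proj_inv : premor Q R :=
  fun j => @Germ RngC Q R j (ev_level (HC j)) (fun q => pmap R (t j) (ab_rep q))
             (ab_lift_hom (pmap_hom R (t j)) (@t_comm j)).

Lemma ab_iso : pro_iso R Q.
Proof.
  exists ab_proj, ab_proj_inv. split; [| split; [| split]].
  - intros j j' v. exists j', (idm _), v. intros x; simpl.
    rewrite pmap_id, (ab_map_in (pmap_hom R v)). reflexivity.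
  - intros j j' v.
    destruct (filtered_complete_span (pidx_filt R) (cmp (t j') v) (t j)) as [k [p [q E]]].
    exists k, p, q. intros x; simpl. change (ab_carrier (pobj R k)) in x.
    unfold ab_map. rewrite !(ab_lift_in (pmap_hom R _) (@t_comm _)), !pmap_cmp.
    exact (f_equal (fun w => pmap R w (ab_rep x)) E).
  - intros j. exists (ev_level (HC j)), (idm _), (t j). intros x; simpl.
    rewrite (ab_lift_in (pmap_hom R _) (@t_comm _)), pmap_id. reflexivity.
  - intros j. exists (ev_level (HC j)), (idm _), (t j). intros x; simpl.
    change (ab_carrier (pobj R (ev_level (HC j)))) in x. destruct (ab_in_surj x) as [a ->].
    rewrite (ab_map_in (pmap_hom R _)), pmap_id. reflexivity.
Qed.
End AbelianizationIso.

(* With a compatible family [e] that is eventually a two-sided unit, each [e j] is an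
   idempotent, and [R] is isomorphic to the system of unital corner rings [e j R_j e j]. *)
Section Corner.
Variables (R : prosys RngC) (e : forall j, pobj R j).
Hypothesis Hc : compatible R e.
Hypothesis HU : ess_unit R e.

Lemma unit_idem (j : pidx R) : rmul (e j) (e j) = e j.
Proof.
  destruct (HU j) as [n [t H]]. specialize (H (e n) (e n)). rewrite (Hc t) in H. apply H.
Qed.

Definition corner_mem (j : pidx R) (x : pobj R j) : Prop := rmul (e j) x = x /\ rmul x (e j) = x.
Definition corner (j : pidx R) := {x : pobj R j | corner_mem x}.

Definition corner_add (j : pidx R) (a b : corner j) : corner j.
Proof.
  exists (radd (proj1_sig a) (proj1_sig b)). destruct a as [a [a1 a2]], b as [b [b1 b2]]; simpl.
  split; [rewrite rmulDr, a1, b1 | rewrite rmulDl, a2, b2]; reflexivity.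
Defined.
Definition corner_zero (j : pidx R) : corner j.
Proof. exists rzero. split; [apply rmul0r | apply rmul0l]. Defined.
Definition corner_neg (j : pidx R) (a : corner j) : corner j.
Proof.
  exists (rneg (proj1_sig a)). destruct a as [a [a1 a2]]; simpl.
  split; [rewrite rmulNr, a1 | rewrite rmulNl, a2]; reflexivity.
Defined.
Definition corner_mul (j : pidx R) (a b : corner j) : corner j.
Proof.
  exists (rmul (proj1_sig a) (proj1_sig b)). destruct a as [a [a1 a2]], b as [b [b1 b2]]; simpl.
  split; [rewrite <- rmulA, a1 | rewrite rmulA, b2]; reflexivity.
Defined.

Definition corner_rng (j : pidx R) : rng.
Proof.
  refine (@Rng (corner j) (@corner_add j) (corner_zero j) (@corner_neg j) (@corner_mul j)
            _ _ _ _ _ _ _); intros; apply sig_ext; simpl.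
  - apply raddA.
  - apply raddC.
  - apply radd0.
  - apply raddN.
  - apply rmulA.
  - apply rmulDr.
  - apply rmulDl.
Defined.

Definition corner_ring (j : pidx R) : ring.
Proof.
  refine (@Ring (corner_rng j) (exist _ (e j) (conj (unit_idem j) (unit_idem j))) _ _);
    intros [x [x1 x2]]; apply sig_ext; assumption.
Defined.

Definition corner_map (j j' : pidx R) (v : hom j j') (x : corner j') : corner j.
Proof.
  exists (pmap R v (proj1_sig x)). destruct x as [x [x1 x2]]; unfold corner_mem; simpl.
  destruct (pmap_hom R v) as [_ [_ [_ h4]]].
  rewrite <- (Hc v), <- !h4, x1, x2. split; reflexivity.
Defined.

Lemma corner_map_hom (j j' : pidx R) (v : hom j j') :
  @ring_hom (corner_ring j') (corner_ring j) (corner_map v).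
Proof.
  destruct (pmap_hom R v) as [h1 [h2 [h3 h4]]].
  split; [split; [| split; [| split]] |]; intros; apply sig_ext; simpl.
  - apply h1.
  - apply h2.
  - apply h3.
  - apply h4.
  - apply Hc.
Qed.

Definition corner_sys : prosys RingC.
Proof.
  refine (@ProSys RingC (pidx R) (pidx_filt R) corner_ring (fun j j' v => @corner_map j j' v)
            (fun j j' v => corner_map_hom v) _ _).
  - intros i x. apply sig_ext. simpl. rewrite pmap_id. reflexivity.
  - intros i j k v u x. apply sig_ext. simpl. rewrite pmap_comp. reflexivity.
Defined.

Let D := pro_map_sys F_Ring_Rng corner_sys.
Let t j := ev_arrow (HU j).

Definition corner_in (j : pidx R) (y : pobj R (ev_level (HU j))) : corner j :=
  exist (@corner_mem j) (pmap R (t j) y) (ev_arrow_spec (HU j) y y).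

Lemma corner_in_hom (j : pidx R) : @rng_hom (pobj R (ev_level (HU j))) (corner_rng j) (@corner_in j).
Proof.
  destruct (pmap_hom R (t j)) as [h1 [h2 [h3 h4]]].
  split; [| split; [| split]]; intros; apply sig_ext; simpl.
  - apply h1.
  - apply h2.
  - apply h3.
  - apply h4.
Qed.

Lemma corner_out_hom (j : pidx R) : @rng_hom (corner_rng j) (pobj R j) (@proj1_sig _ _).
Proof. split; [| split; [| split]]; intros; reflexivity. Qed.

Definition corner_proj : premor R D :=
  fun j => @Germ RngC R D j (ev_level (HU j)) (@corner_in j) (corner_in_hom j).
Definition corner_incl : premor D R :=
  fun j => @Germ RngC D R j j (@proj1_sig _ _) (corner_out_hom j).

Lemma corner_iso : pro_iso R D.
Proof.
  exists corner_proj, corner_incl. split; [| split; [| split]].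
  - intros j j' v.
    destruct (filtered_complete_span (pidx_filt R) (cmp (t j') v) (t j)) as [k [p [q E]]].
    exists k, p, q. intros x. apply sig_ext; simpl. rewrite !pmap_cmp.
    exact (f_equal (fun w => pmap R w x) E).
  - intros j j' v. exists j', (idm _), v. intros x; simpl. rewrite pmap_id. reflexivity.
  - intros j. exists (ev_level (HU j)), (idm _), (t j). intros x; simpl. rewrite pmap_id. reflexivity.
  - intros j. exists (ev_level (HU j)), (idm _), (t j). intros x. apply sig_ext; simpl.
    rewrite pmap_id. reflexivity.
Qed.

Lemma corner_ess_comm : ess_comm R -> ess_comm D.
Proof.
  intros H j. destruct (H j) as [n [t' Ht]]. exists n, t'. intros y y'. apply sig_ext, Ht.
Qed.
End Corner.

Section Characterisation.
Variable R : prosys RngC.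

Lemma img_crngobj_iff :
  (exists C : prosys CRngC, pro_iso R (pro_map_sys F_CRng_Rng C)) <-> is_crngobj (img_rng R).
Proof.
  unfold is_crngobj. rewrite img_comm_iff. split.
  - intros [C HI]. split; [apply rngobj_img |].
    exact (pro_iso_ess_comm (D := pro_map_sys F_CRng_Rng C) (fun i => @crng_comm (pobj C i)) HI).
  - intros [_ Hc]. exists (ab_sys R). exact (ab_iso Hc).
Qed.

Lemma pro_iso_ring_unit (D : prosys RingC) :
  pro_iso R (pro_map_sys F_Ring_Rng D) -> exists e, compatible R e /\ ess_unit R e.
Proof.
  apply (pro_iso_ess_unit (D := pro_map_sys F_Ring_Rng D) (one := fun i => rone (pobj D i))).
  - intros i x. split; [apply rmul1l | apply rmul1r].
  - intros i i' v. apply (proj2 (pmap_hom D v)).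
Qed.

Lemma img_uringobj_iff :
  (exists C : prosys RingC, pro_iso R (pro_map_sys F_Ring_Rng C)) <->
  exists e : premor One (ro_X (img_rng R)), is_uringobj (@URingData (img_rng R) e).
Proof.
  split.
  - intros [C HI]. destruct (pro_iso_ring_unit HI) as [e He].
    exists (unit_premor e).
    split; [apply rngobj_img | exact (proj2 (img_unit_laws_iff (unit_premor e)) He)].
  - intros [E [_ HE]]. destruct (proj1 (img_unit_laws_iff E) HE) as [Hc HU].
    exists (corner_sys Hc HU). apply corner_iso.
Qed.

Lemma img_curingobj_iff :
  (exists C : prosys CRingC, pro_iso R (pro_map_sys F_Ring_Rng (pro_map_sys F_CRing_Ring C))) <->
  exists e : premor One (ro_X (img_rng R)), is_curingobj (@URingData (img_rng R) e).
Proof.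
  split.
  - intros [C HI]. destruct (pro_iso_ring_unit HI) as [e He].
    exists (unit_premor e).
    split; [split; [apply rngobj_img | exact (proj2 (img_unit_laws_iff (unit_premor e)) He)] |].
    apply img_comm_iff.
    exact (pro_iso_ess_comm (D := pro_map_sys F_Ring_Rng (pro_map_sys F_CRing_Ring C))
             (fun i => @cring_comm (pobj C i)) HI).
  - intros [E [[_ HE] Hcomm]]. destruct (proj1 (img_unit_laws_iff E) HE) as [Hc HU].
    exists (ab_ring_sys (corner_sys Hc HU)). rewrite ab_ring_sys_forget.
    apply pro_iso_trans with (pro_map_sys F_Ring_Rng (corner_sys Hc HU)); [apply corner_iso |].
    exact (ab_iso (corner_ess_comm (proj1 (img_comm_iff R) Hcomm))).
Qed.
End Characterisation.

Theorem mainTheorem4 :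
  FF_ProRng_RngObj /\ FF_ProCRng_CRngObj /\ pro_fully_faithful F_CRng_Rng /\ FF_CRngObj_RngObj /\
  FF_ProRing_RingObj /\ FF_ProCRing_CRingObj /\ pro_fully_faithful F_CRing_Ring /\
  FF_CRingObj_RingObj /\
  (forall R : prosys RngC,
     ((exists C : prosys CRngC, pro_iso R (pro_map_sys F_CRng_Rng C)) <->
        is_crngobj (img_rng R)) /\
     ((exists C : prosys RingC, pro_iso R (pro_map_sys F_Ring_Rng C)) <->
        exists e : premor One (ro_X (img_rng R)), is_uringobj (@URingData (img_rng R) e)) /\
     ((exists C : prosys CRingC,
         pro_iso R (pro_map_sys F_Ring_Rng (pro_map_sys F_CRing_Ring C))) <->
        exists e : premor One (ro_X (img_rng R)), is_curingobj (@URingData (img_rng R) e))).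
Proof.
  split; [exact img_rng_fully_faithful |].
  split; [exact img_crng_fully_faithful |].
  split; [exact pro_forget_comm_rng_fully_faithful |].
  split; [exact crngobj_rngobj_fully_faithful |].
  split; [exact img_ring_fully_faithful |].
  split; [exact img_cring_fully_faithful |].
  split; [exact pro_forget_comm_ring_fully_faithful |].
  split; [exact cringobj_ringobj_fully_faithful |].
  intros R. split; [| split].
  - exact (img_crngobj_iff R).
  - exact (img_uringobj_iff R).
  - exact (img_curingobj_iff R).
Qed.
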